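(* Assume $\mu_1>\mu_a$ for all $a\in\{2,\dots,K\}$ and $c_1,\dots,c_K>0$. Let $(x_2^*,\dots,x_K^* )\in[0,\infty)^{K-1}$ be a maximizer of \[ (x_2,\dots,x_K)\mapsto\frac{\min_{a\neq1}g_a(x_a)}{c_1+c_2x_2+\cdots+c_Kx_K}. \] Then $g_a(x_a^* )=g_b(x_b^* )$ for all $a,b\in\{2,\dots,K\}$.
   Context: Rewards belong to a one-parameter natural exponential family parametrized by the mean; $d(\mu,\mu')$ is the KL divergence between members with means $\mu,\mu'$. For $\alpha\in[0,1]$, $I_\alpha(x,y)=\alpha\,d(x,\alpha x+(1-\alpha)y)+(1-\alpha)\,d(y,\alpha x+(1-\alpha)y)$. For $a\in\{2,\dots,K\}$ and $x\ge0$, $g_a(x)=(1+x)I_{1/(1+x)}(\mu_1,\mu_a)$; $g_a$ is a continuous strictly increasing bijection from $[0,\infty)$ onto $[0,d(\mu_1,\mu_a))$. *)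

From HB Require Import structures.
From mathcomp Require Import all_boot all_order all_algebra.
From mathcomp Require Import all_classical all_reals all_analysis.
Set Implicit Arguments. Unset Strict Implicit. Unset Printing Implicit Defensive.
Import Order.TTheory GRing.Theory Num.Theory.
Local Open Scope ring_scope.

Section Defs.
Variable R : realType.

Definition Ialpha (d : R -> R -> R) (alpha x y : R) : R :=
  alpha * d x (alpha * x + (1 - alpha) * y)
  + (1 - alpha) * d y (alpha * x + (1 - alpha) * y).

Definition gfun (d : R -> R -> R) (mu1 mua : R) (x : R) : R :=
  (1 + x) * Ialpha d (1 / (1 + x)) mu1 mua.

(* arms are indexed by naturals 1..K; arm 1 is the optimal one.
   min_{a in {2..K}} g_a(x_a), for K >= 2 (the seed g_2(x_2) lies in the range,
   so this is the true minimum). *)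
Definition gmin (d : R -> R -> R) (mu : nat -> R) (K : nat) (x : nat -> R) : R :=
  \big[Num.min/gfun d (mu 1%N) (mu 2%N) (x 2%N)]_(2 <= a < K.+1)
     gfun d (mu 1%N) (mu a) (x a).

Definition objective (d : R -> R -> R) (mu c : nat -> R) (K : nat) (x : nat -> R) : R :=
  gmin d mu K x / (c 1%N + \sum_(2 <= a < K.+1) c a * x a).

End Defs.

From HB Require Import structures.
From mathcomp Require Import all_boot all_order all_algebra.
From mathcomp Require Import all_classical all_reals all_analysis.
Set Implicit Arguments. Unset Strict Implicit. Unset Printing Implicit Defensive.
Import Order.TTheory GRing.Theory Num.Theory numFieldNormedType.Exports.
Local Open Scope ring_scope.
Local Open Scope classical_set_scope.

(* Let m > 0 be the optimal minimum.  If some arm b had g_b(x_b^* ) > m, then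
   lowering x_b^* to the point where g_b equals m (it exists since g_b is onto
   [0, d(mu_1, mu_b)) and increasing) keeps the minimum at least m while
   strictly decreasing the cost c_1 + sum_a c_a x_a, contradicting maximality.
   Positivity of m holds because the constant allocation 1 has a positive
   objective value. *)

Lemma ltr_pdiv_lelt (R : realFieldType) (m m' D D' : R) :
  0 < m -> m <= m' -> 0 < D' -> D' < D -> m / D < m' / D'.
Proof.
move=> m_gt0 le_mm' D'_gt0 lt_D'D.
have D_gt0 : 0 < D by exact: lt_trans lt_D'D.
apply: (@lt_le_trans _ _ (m / D')); first by rewrite ltr_pM2l // ltf_pV2.
by rewrite ler_wpM2r // invr_ge0 ltW.
Qed.

Lemma incr_lt_inv (R : realDomainType) (f : R -> R) (x y : R) :
  (forall u v : R, 0 <= u -> u < v -> f u < f v) ->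
  0 <= y -> f x < f y -> x < y.
Proof.
move=> f_incr y_ge0 lt_fxy; rewrite ltNge; apply/negP.
rewrite le_eqVlt => /predU1P[eq_yx | lt_yx]; first by move: lt_fxy; rewrite eq_yx ltxx.
by move: (lt_trans lt_fxy (f_incr _ _ y_ge0 lt_yx)); rewrite ltxx.
Qed.

Section Objective.
Variables (R : realType) (d : R -> R -> R) (K : nat) (mu c : nat -> R).
Hypothesis hc : forall a : nat, (1 <= a <= K)%N -> 0 < c a.

Let g (a : nat) : R -> R := gfun d (mu 1%N) (mu a).

Definition cost (x : nat -> R) : R := c 1%N + \sum_(2 <= a < K.+1) c a * x a.

Lemma objectiveE (x : nat -> R) : objective d mu c K x = gmin d mu K x / cost x.
Proof. by []. Qed.

Lemma gmin_le_gfun (x : nat -> R) (a : nat) :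
  (2 <= a <= K)%N -> gmin d mu K x <= g a (x a).
Proof.
move=> aK; rewrite /gmin.
have : a \in index_iota 2 K.+1 by rewrite mem_index_iota ltnS.
elim: (index_iota 2 K.+1) => [//|i s IH]; rewrite inE big_cons ge_min.
by case/orP => [/eqP -> | /IH ->]; rewrite ?lexx ?orbT.
Qed.

Section LowerBound.
Variable P : R -> Prop.
Hypothesis P_min : forall u v : R, P u -> P v -> P (Num.min u v).

Lemma gmin_ind (x : nat -> R) : (2 <= K)%N ->
  (forall a : nat, (2 <= a <= K)%N -> P (g a (x a))) -> P (gmin d mu K x).
Proof.
move=> K_ge2 Pg; rewrite /gmin big_seq.
apply: (big_ind P); [by apply: Pg; rewrite leqnn | exact: P_min |].
by move=> i; rewrite mem_index_iota ltnS; apply: Pg.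
Qed.

End LowerBound.

Lemma le_gmin (m : R) (x : nat -> R) : (2 <= K)%N ->
  (forall a : nat, (2 <= a <= K)%N -> m <= g a (x a)) -> m <= gmin d mu K x.
Proof. by apply: (gmin_ind (P := fun v => m <= v)) => u v; rewrite le_min => ->. Qed.

Lemma gt0_gmin (x : nat -> R) : (2 <= K)%N ->
  (forall a : nat, (2 <= a <= K)%N -> 0 < g a (x a)) -> 0 < gmin d mu K x.
Proof. by apply: (gmin_ind (P := fun v => 0 < v)) => u v; rewrite lt_min => ->. Qed.

Lemma cost_gt0 (x : nat -> R) : (1 <= K)%N ->
  (forall a : nat, (2 <= a <= K)%N -> 0 <= x a) -> 0 < cost x.
Proof.
move=> K_ge1 x_ge0; apply: ltr_wpDr; last by apply: hc; rewrite K_ge1.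
rewrite big_seq; apply: sumr_ge0 => i; rewrite mem_index_iota ltnS => /andP[i_ge2 iK].
by rewrite mulr_ge0 ?x_ge0 ?i_ge2 // ltW // hc // iK ltnW.
Qed.

Lemma cost_update_lt (x : nat -> R) (b : nat) (y : R) :
  (2 <= b <= K)%N -> y < x b -> cost ([eta x with b |-> y]) < cost x.
Proof.
move=> bK lt_yx; rewrite ltrD2l !(bigD1_seq b) ?iota_uniq ?mem_index_iota ?ltnS //=.
rewrite eqxx; apply: ltr_leD.
  by case/andP: bK => b_ge2 bK; rewrite ltr_pM2l // hc // bK ltnW.
by rewrite (eq_bigr (fun i => c i * x i)) ?lexx // => i /= /negbTE ->.
Qed.

Lemma objective_lt_update (x : nat -> R) (b : nat) (y : R) :
  (2 <= K)%N -> (forall a : nat, (2 <= a <= K)%N -> 0 <= x a) ->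
  (2 <= b <= K)%N -> 0 <= y < x b -> 0 < gmin d mu K x -> gmin d mu K x <= g b y ->
  objective d mu c K x < objective d mu c K ([eta x with b |-> y]).
Proof.
move=> K_ge2 x_ge0 bK /andP[y_ge0 lt_yx] gmin_gt0 le_gmin_gy.
have K_ge1 : (1 <= K)%N by exact: ltnW.
have x'_ge0 a : (2 <= a <= K)%N -> 0 <= [eta x with b |-> y] a.
  by move=> aK /=; case: eqP => _ //; exact: x_ge0.
rewrite !objectiveE ltr_pdiv_lelt ?cost_gt0 ?cost_update_lt //.
apply: le_gmin => // a aK /=; case: eqP => [-> //|_].
exact: gmin_le_gfun.
Qed.

End Objective.

Theorem lemma2 (R : realType) (d : R -> R -> R) (K : nat) (mu c : nat -> R)
  (hK : (2 <= K)%N)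
  (hmu : forall a : nat, (2 <= a <= K)%N -> mu a < mu 1%N)
  (hc : forall a : nat, (1 <= a <= K)%N -> 0 < c a)
  (* standing facts about g_a from the context (d = KL divergence of the NEF) *)
  (hg_cont : forall a : nat, (2 <= a <= K)%N ->
     {within [set x : R | 0 <= x], continuous (gfun d (mu 1%N) (mu a))})
  (hg_incr : forall a : nat, (2 <= a <= K)%N -> forall x y : R,
     0 <= x -> x < y -> gfun d (mu 1%N) (mu a) x < gfun d (mu 1%N) (mu a) y)
  (hg_range : forall a : nat, (2 <= a <= K)%N -> forall x : R,
     0 <= x -> 0 <= gfun d (mu 1%N) (mu a) x < d (mu 1%N) (mu a))
  (hg_onto : forall a : nat, (2 <= a <= K)%N -> forall y : R,
     0 <= y < d (mu 1%N) (mu a) -> exists2 x : R, 0 <= x & gfun d (mu 1%N) (mu a) x = y)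
  (xs : nat -> R)
  (hxs : forall a : nat, (2 <= a <= K)%N -> 0 <= xs a)
  (hmax : forall y : nat -> R, (forall a : nat, (2 <= a <= K)%N -> 0 <= y a) ->
     objective d mu c K y <= objective d mu c K xs) :
  forall a b : nat, (2 <= a <= K)%N -> (2 <= b <= K)%N ->
    gfun d (mu 1%N) (mu a) (xs a) = gfun d (mu 1%N) (mu b) (xs b).
Proof.
set g := fun a => gfun d (mu 1%N) (mu a).
set m := gmin d mu K xs.
have m_gt0 : 0 < m.
  have one_ge0 a : (2 <= a <= K)%N -> 0 <= (fun=> 1 : R) a by rewrite ler01.
  have g1_gt0 a : (2 <= a <= K)%N -> 0 < g a 1.
    move=> aK; have /andP[g0_ge0 _] := hg_range a aK 0 (lexx 0).
    exact: le_lt_trans g0_ge0 (hg_incr a aK 0 1 (lexx 0) ltr01).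
  have obj1_gt0 : 0 < objective d mu c K (fun=> 1).
    by rewrite objectiveE divr_gt0 ?gt0_gmin ?cost_gt0 ?(ltnW hK).
  have := lt_le_trans obj1_gt0 (hmax _ one_ge0).
  by rewrite objectiveE pmulr_lgt0 // invr_gt0 cost_gt0 ?(ltnW hK).
suff g_eq_m b : (2 <= b <= K)%N -> g b (xs b) = m.
  by move=> a b aK bK; rewrite -/(g a _) -/(g b _) !g_eq_m.
move=> bK; apply/eqP; rewrite eq_le gmin_le_gfun // andbT leNgt; apply/negP => lt_m_gb.
have /andP[_ gb_lt_d] := hg_range b bK (xs b) (hxs b bK).
have [yb yb_ge0 gyb] : exists2 y, 0 <= y & g b y = m.
  by apply: hg_onto; rewrite // ltW //= (lt_trans lt_m_gb).
have lt_yb_xb : yb < xs b.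
  by apply: (incr_lt_inv (hg_incr b bK) (hxs b bK)); rewrite -/(g b _) gyb.
have x'_ge0 a : (2 <= a <= K)%N -> 0 <= [eta xs with b |-> yb] a.
  by move=> aK /=; case: eqP => _ //; exact: hxs.
have := hmax _ x'_ge0; apply/negP; rewrite -ltNge.
apply: (objective_lt_update hc hK hxs bK _ m_gt0); first by rewrite yb_ge0.
by rewrite -/(g b yb) gyb.
Qed.
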